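(* Under the hypotheses and notation below, the coefficients of $p_\lambda=\sum_{\ell=1}^n c_{\lambda\lambda^{(\ell)}}m_{\lambda^{(\ell)}}$ are $$c_{\lambda\lambda^{(\ell)}}=\sum_{\substack{\ell=j_r<j_{r-1}<\cdots<j_1<j_0=n\\ r=1,\dots,n-\ell}}\frac{d_{\lambda^{(j_0)}\lambda^{(j_1)}}d_{\lambda^{(j_1)}\lambda^{(j_2)}}\cdots d_{\lambda^{(j_{r-1})}\lambda^{(j_r)}}}{(\epsilon_\lambda-\epsilon_{\lambda^{(j_1)}})\cdots(\epsilon_\lambda-\epsilon_{\lambda^{(j_r)}})},$$ with the convention that the empty sum (case $\ell=n$) equals $1$, so $c_{\lambda\lambda}=1$.
   Context: Setting: $E$ real Euclidean space spanned by an irreducible root system $R$, Weyl group $W$, positive roots $R^+$, $\mathcal{Q}^+=\mathrm{Span}_{\mathbb{N}}(R^+)$, weight lattice $\mathcal{P}$, dominant weights $\mathcal{P}^+$, partial order $\lambda\succeq\mu$ iff $\lambda-\mu\in\mathcal{Q}^+$. $\mathcal{A}^W$ is the space of $W$-invariants in the group algebra of $\mathcal{P}$ (formal exponentials $e^\lambda$), with basis $m_\lambda=\sum_{\mu\in W(\lambda)}e^\mu$, $\lambda\in\mathcal{P}^+$; $\mathcal{A}^W_\lambda=\mathrm{Span}\{m_\mu\mid\mu\in\mathcal{P}^+,\mu\preceq\lambda\}$. $D:\mathcal{A}^W\to\mathcal{A}^W$ is linear with $D(\mathcal{A}^W_\lambda)\subseteq\mathcal{A}^W_\lambda$ for all dominant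 $\lambda$; $\{s_\lambda\}$ is a basis with $m_\lambda=\sum_{\mu\preceq\lambda}a_{\lambda\mu}s_\mu$, $a_{\lambda\lambda}=1$, and $Dm_\lambda=\sum_{\mu\preceq\lambda}b_{\lambda\mu}s_\mu$, $b_{\lambda\lambda}=\epsilon_\lambda$ (sums over dominant $\mu$); $D$ is regular: $\epsilon_\mu\ne\epsilon_\lambda$ whenever $\mu\prec\lambda$ are dominant. $p_\lambda$ is the unique element of $\mathcal{A}^W$ with $Dp_\lambda=\epsilon_\lambda p_\lambda$ and $p_\lambda=m_\lambda+\sum_{\mu\prec\lambda}c_{\lambda\mu}m_\mu$. For fixed dominant $\lambda$, $\lambda^{(1)},\dots,\lambda^{(n)}=\lambda$ enumerates $\{\mu\in\mathcal{P}^+\mid\mu\preceq\lambda\}$ with $\lambda^{(i)}\prec\lambda^{(j)}\Rightarrow i<j$, and $d_{\lambda^{(j)}\lambda^{(k)}}=b_{\lambda^{(j)}\lambda^{(k)}}-\epsilon_\lambda a_{\lambda^{(j)}\lambda^{(k)}}$ for $j>k$. *)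

From HB Require Import structures.
From mathcomp Require Import all_boot all_order all_algebra.
From mathcomp Require Import reals.
Set Implicit Arguments. Unset Strict Implicit. Unset Printing Implicit Defensive.
Import Order.TTheory GRing.Theory Num.Theory.
Local Open Scope ring_scope.

Section RootSystem.
Variables (R : realType) (r : nat).
Implicit Types (u v lam mu al be xi : 'rV[R]_r) (Phi : seq 'rV[R]_r).

Definition dotp u v : R := (u *m v^T) 0 0.

Definition cpair be al : R := 2 * dotp be al / dotp al al.

Definition refl al be : 'rV[R]_r := be - cpair be al *: al.

Definition is_int (x : R) : Prop := exists z : int, x = z%:~R.

(** (crystallographic, not necessarily reduced) root system spanning E *)
Record root_system Phi : Prop := {
  rs_uniq : uniq Phi;
  rs_nz : 0 \notin Phi;
  rs_span : forall v, exists k : 'I_(size Phi) -> R,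
      v = \sum_(i < size Phi) k i *: Phi`_i;
  rs_refl : forall al be, al \in Phi -> be \in Phi -> refl al be \in Phi;
  rs_int : forall al be, al \in Phi -> be \in Phi -> is_int (cpair be al) }.

Definition irreducible_root_system Phi : Prop :=
  [/\ root_system Phi, Phi != [::] &
      forall P : pred 'rV[R]_r,
        (forall al be, al \in Phi -> be \in Phi -> P al -> ~~ P be ->
           dotp al be = 0) ->
        all P Phi \/ all (predC P) Phi].

Definition regular_vector Phi xi : Prop :=
  forall al, al \in Phi -> dotp al xi != 0.
Definition positive_root Phi xi al : bool := (al \in Phi) && (0 < dotp al xi).

Definition weight Phi lam : Prop :=
  forall al, al \in Phi -> is_int (cpair lam al).
Definition dominant Phi xi lam : Prop :=
  weight Phi lam /\ forall al, positive_root Phi xi al -> 0 <= dotp lam al.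

Definition wle Phi xi mu lam : Prop :=
  exists k : 'I_(size Phi) -> nat,
    lam - mu = \sum_(i < size Phi | positive_root Phi xi Phi`_i) (k i)%:R *: Phi`_i.
Definition wlt Phi xi mu lam : Prop := wle Phi xi mu lam /\ mu <> lam.

Definition lower_enum Phi xi lam (rs : seq 'rV[R]_r) : Prop :=
  uniq rs /\ forall mu, mu \in rs <-> (dominant Phi xi mu /\ wle Phi xi mu lam).

Definition dominant_basis (F : fieldType) (V : lmodType F) Phi xi
    (f : 'rV[R]_r -> V) : Prop :=
  (forall (rs : seq 'rV[R]_r) (k : 'rV[R]_r -> F), uniq rs ->
     (forall mu, mu \in rs -> dominant Phi xi mu) ->
     \sum_(mu <- rs) k mu *: f mu = 0 -> forall mu, mu \in rs -> k mu = 0)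
  /\ (forall v : V, exists (rs : seq 'rV[R]_r) (k : 'rV[R]_r -> F),
     (forall mu, mu \in rs -> dominant Phi xi mu) /\
     v = \sum_(mu <- rs) k mu *: f mu).

End RootSystem.

Section Formula.
Variables (F : fieldType) (n : nat).

(** for a chain top = j_0 > j_1 > ... > j_r listed as top :: rest,
    prod_i dd j_{i-1} j_i / den j_i *)
Definition chain_term (dd : 'I_n.+1 -> 'I_n.+1 -> F) (den : 'I_n.+1 -> F)
    (top : 'I_n.+1) (rest : seq 'I_n.+1) : F :=
  \prod_(t <- pairmap (fun x y => dd x y / den y) top rest) t.

(** sum over all chains  l = j_r < ... < j_1 < j_0 = top (top = ord_max),
    i.e. over all sets S of intermediate indices; empty sum convention = 1
    when l = top *)
Definition cformula (dd : 'I_n.+1 -> 'I_n.+1 -> F) (den : 'I_n.+1 -> F)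
    (l : 'I_n.+1) : F :=
  if l == ord_max then 1 else
  \sum_(S : {set 'I_n.+1} | S \subset [set k : 'I_n.+1 | (l < k < @ord_max n)%N])
     chain_term dd den ord_max
       (sort (fun x y : 'I_n.+1 => (y <= x)%N) (enum (l |: S))).

End Formula.

From HB Require Import structures.
From mathcomp Require Import all_boot all_order all_algebra.
From mathcomp Require Import reals.
From mathcomp Require Import zify boolp.
Set Implicit Arguments. Unset Strict Implicit. Unset Printing Implicit Defensive.
Import Order.TTheory GRing.Theory Num.Theory.
Local Open Scope ring_scope.

(** Writing p = sum_j c_j m_j and expanding D p = eps_lam p in the basis
    (s_mu), the coefficient of s_(lambda^(k)) gives, by triangularity of a and
    b, the recursion  c_k (eps_lam - eps_k) = sum_(j > k) c_j d_(j k).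
    Regularity makes eps_lam - eps_k invertible for k < n, so this recursion,
    started from c_n = 1, determines c.  The chain sum obeys the same
    recursion: grouping the chains n > ... > l by their element j just above
    l, those with a given j are the chains n > ... > j extended by j > l. *)

Lemma sorted_mem_le_last (T : eqType) (leT : rel T) (s : seq T) (x y : T) :
  reflexive leT -> transitive leT -> sorted leT s -> x \in s -> leT x (last y s).
Proof.
move=> leT_refl leT_tr; elim: s y => [//|z s IHs] y /= zs_path.
rewrite inE => /predU1P [->|xs]; last exact: IHs (path_sorted zs_path) xs.
have /allP z_le := order_path_min leT_tr zs_path.
have : last z s \in z :: s := mem_last z s.
by rewrite inE => /predU1P [->|/z_le].
Qed.

Section ChainFormula.
Variables (F : fieldType) (n : nat) (dd : 'I_n.+1 -> 'I_n.+1 -> F) (den : 'I_n.+1 -> F).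

Local Notation geq_ord := (fun x y : 'I_n.+1 => (y <= x)%N).
Local Notation desc_enum S := (sort geq_ord (enum S)).
Local Notation above l := [set k : 'I_n.+1 | (l < k < @ord_max n)%N].

Lemma geq_ord_trans : transitive geq_ord.
Proof. by move=> y x z /= yx zy; apply: leq_trans zy yx. Qed.

Lemma geq_ord_anti : antisymmetric geq_ord.
Proof. by move=> x y /= /andP[yx xy]; apply/val_inj/anti_leq; rewrite xy yx. Qed.

Lemma geq_ord_total : total geq_ord.
Proof. by move=> x y /=; apply: leq_total. Qed.

Lemma mem_desc_enum (S : {set 'I_n.+1}) : desc_enum S =i S.
Proof. by move=> k; rewrite mem_sort mem_enum. Qed.

Lemma desc_enum_last_le (S : {set 'I_n.+1}) (x k : 'I_n.+1) :
  k \in S -> (last x (desc_enum S) <= k)%N.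
Proof.
move=> kS; apply: (@sorted_mem_le_last _ geq_ord _ k x _ geq_ord_trans).
- by move=> ?; exact: leqnn.
- exact: sort_sorted geq_ord_total _.
- by rewrite mem_desc_enum.
Qed.
Arguments desc_enum_last_le {S} x {k}.

Lemma desc_enum_setU1_min (l : 'I_n.+1) (S : {set 'I_n.+1}) :
  (forall k, k \in S -> (l < k)%N) -> desc_enum (l |: S) = rcons (desc_enum S) l.
Proof.
move=> l_lt; apply: (sorted_eq geq_ord_trans geq_ord_anti).
- exact: sort_sorted geq_ord_total _.
- have := sort_sorted geq_ord_total (enum S); have := @mem_desc_enum S.
  case: (desc_enum S) => [//|x s] memS /= xs_path.
  rewrite rcons_path xs_path /= ltnW // l_lt // -memS.
  exact: mem_last.
- rewrite perm_sort perm_sym perm_rcons; apply: uniq_perm.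
  + by rewrite /= sort_uniq enum_uniq mem_desc_enum andbT; apply/negP => /l_lt; rewrite ltnn.
  + exact: enum_uniq.
  + by move=> k; rewrite mem_enum !inE mem_desc_enum.
Qed.

Lemma chain_term_rcons (top l : 'I_n.+1) (s : seq 'I_n.+1) :
  chain_term dd den top (rcons s l) = chain_term dd den top s * (dd (last top s) l / den l).
Proof. by rewrite /chain_term -cats1 pairmap_cat big_cat big_seq1. Qed.

Lemma ltn_neq_ord_max (j : 'I_n.+1) : j != ord_max -> (j < n)%N.
Proof.
move=> /eqP j_max; have := ltn_ord j; rewrite ltnS leq_eqVlt => /predU1P[jn|//].
by case: j_max; apply: val_inj.
Qed.

Lemma sum_chains_ending_top (l : 'I_n.+1) :
  \sum_(S : {set 'I_n.+1} | (S \subset above l) && (last ord_max (desc_enum S) == ord_max))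
    chain_term dd den ord_max (desc_enum S) = 1.
Proof.
rewrite (big_pred1 set0) => [|S]; first by rewrite enum_set0 /chain_term big_nil.
apply/andP/eqP => [[S_above /eqP last_max] | ->]; last by rewrite sub0set enum_set0.
apply/setP => k; rewrite inE; apply/negP => kS.
have := desc_enum_last_le ord_max kS; rewrite last_max leqNgt.
by have := subsetP S_above k kS; rewrite inE => /andP[_ ->].
Qed.

Lemma sum_chains_ending_at (l j : 'I_n.+1) : (l < j)%N -> j != ord_max ->
  \sum_(S : {set 'I_n.+1} | (S \subset above l) && (last ord_max (desc_enum S) == j))
    chain_term dd den ord_max (desc_enum S) = cformula dd den j.
Proof.
move=> lj j_max; rewrite /cformula (negbTE j_max).
rewrite (reindex_onto (fun S => j |: S) (fun S => S :\ j)) /=; last first.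
  move=> S /andP[_ /eqP last_j]; apply: setD1K; rewrite -mem_desc_enum.
  by have := mem_last ord_max (desc_enum S); rewrite last_j inE (negbTE j_max).
apply: eq_bigl => S; apply/idP/idP => [/andP[/andP[jS_above /eqP last_j] /eqP jS_j] | S_above].
  apply/subsetP => k kS; have jSk : k \in j |: S by rewrite setU1r.
  have := subsetP jS_above k jSk; rewrite !inE => /andP[_ ->]; rewrite andbT.
  have := desc_enum_last_le ord_max jSk; rewrite last_j leq_eqVlt => /predU1P[jk|//].
  by move: kS; rewrite -jS_j -(val_inj jk) setD11.
have j_lt : forall k, k \in S -> (j < k)%N.
  by move=> k /(subsetP S_above); rewrite inE => /andP[].
have jNS : j \notin S by apply/negP => /j_lt; rewrite ltnn.
rewrite desc_enum_setU1_min // last_rcons setU1K // !eqxx !andbT.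
apply/subsetP => k; rewrite !inE => /predU1P[->|kS]; first by rewrite lj ltn_neq_ord_max.
have := subsetP S_above k kS; rewrite inE => /andP[jk ->].
by rewrite (ltn_trans lj jk).
Qed.

Lemma cformula_rec (l : 'I_n.+1) : l != ord_max ->
  cformula dd den l = \sum_(j : 'I_n.+1 | (l < j)%N) cformula dd den j * (dd j l / den l).
Proof.
move=> l_max; rewrite {1}/cformula (negbTE l_max).
have last_gt (S : {set 'I_n.+1}) : S \subset above l -> (l < last ord_max (desc_enum S))%N.
  move=> S_above; have := mem_last ord_max (desc_enum S).
  rewrite inE mem_desc_enum => /predU1P[->|/(subsetP S_above)]; last by rewrite inE => /andP[].
  exact: ltn_neq_ord_max.
under eq_bigr => S S_above.
  rewrite desc_enum_setU1_min; last by move=> k /(subsetP S_above); rewrite inE => /andP[].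
  rewrite chain_term_rcons; over.
rewrite (partition_big (fun S : {set 'I_n.+1} => last ord_max (desc_enum S))
  (fun j : 'I_n.+1 => (l < j)%N) last_gt) /=; apply: eq_bigr => j lj.
under eq_bigr => S /andP[_ /eqP last_j] do rewrite last_j.
rewrite -big_distrl /=; congr (_ * _).
have [->|j_max] := eqVneq j ord_max; first by rewrite sum_chains_ending_top /cformula eqxx.
exact: sum_chains_ending_at.
Qed.

Lemma eq_cformula (c : 'I_n.+1 -> F) :
  c ord_max = 1 -> (forall l, l != ord_max -> den l != 0) ->
  (forall l, l != ord_max -> c l * den l = \sum_(j : 'I_n.+1 | (l < j)%N) c j * dd j l) ->
  forall l, c l = cformula dd den l.
Proof.
move=> c_max den_nz c_rec l; have [k] := ubnP (n - l); elim: k l => // k IHk l lt_nl.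
have [->|l_max] := eqVneq l ord_max; first by rewrite c_max /cformula eqxx.
rewrite cformula_rec //; apply: (mulIf (den_nz l l_max)); rewrite c_rec // big_distrl /=.
apply: eq_bigr => j lj; rewrite -mulrA divfK ?den_nz ?IHk //.
by have := ltn_ord j; lia.
Qed.

End ChainFormula.

Section TriangularEigenvector.
Variables (F : fieldType) (V : lmodType F) (D : {linear V -> V}) (n : nat).
Variables (u w : 'I_n.+1 -> V) (A B : 'I_n.+1 -> 'I_n.+1 -> F).
Hypothesis w_free : forall k : 'I_n.+1 -> F, \sum_(i < n.+1) k i *: w i = 0 -> forall i, k i = 0.
Hypothesis u_expand : forall j, u j = \sum_(i < n.+1) A j i *: w i.
Hypothesis Du_expand : forall j, D (u j) = \sum_(i < n.+1) B j i *: w i.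

Lemma eigenvector_coef_eq (ev : F) (c : 'I_n.+1 -> F) :
  D (\sum_(j < n.+1) c j *: u j) = ev *: \sum_(j < n.+1) c j *: u j ->
  forall i, \sum_(j < n.+1) c j * (B j i - ev * A j i) = 0.
Proof.
move=> D_eigen; apply: w_free.
transitivity (D (\sum_(j < n.+1) c j *: u j) - ev *: \sum_(j < n.+1) c j *: u j); last by rewrite D_eigen subrr.
rewrite linear_sum scaler_sumr -sumrB; under eq_bigr do rewrite scaler_suml.
rewrite exchange_big /=; apply: eq_bigr => j _.
rewrite linearZ /= Du_expand u_expand !scaler_sumr -sumrB.
apply: eq_bigr => i _; rewrite !scalerA -scalerBl.
by congr (_ *: _); rewrite mulrBr mulrA [c j * ev]mulrC.
Qed.

Hypothesis A_triu : forall j i : 'I_n.+1, (j < i)%N -> A j i = 0.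
Hypothesis B_triu : forall j i : 'I_n.+1, (j < i)%N -> B j i = 0.
Hypothesis A_diag : forall i, A i i = 1.

Lemma eigenvector_coef_rec (ev : F) (c : 'I_n.+1 -> F) :
  D (\sum_(j < n.+1) c j *: u j) = ev *: \sum_(j < n.+1) c j *: u j ->
  forall i, c i * (ev - B i i) = \sum_(j : 'I_n.+1 | (i < j)%N) c j * (B j i - ev * A j i).
Proof.
move=> D_eigen i; have := eigenvector_coef_eq D_eigen i.
rewrite (bigD1 i) //= (bigID (fun j : 'I_n.+1 => (i < j)%N)) /= A_diag mulr1.
rewrite [X in _ + (_ + X)]big1 => [|j /andP[ji /negbTE i_lt_j]]; last first.
  have lt_ji : (j < i)%N by rewrite ltn_neqAle leqNgt i_lt_j andbT; exact: ji.
  by rewrite A_triu // B_triu // mulr0 subr0 mulr0.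
rewrite addr0 (eq_bigl (fun j : 'I_n.+1 => (i < j)%N)) => [|j]; last first.
  by rewrite andb_idl // => ij; apply: contraTneq ij => ->; rewrite ltnn.
by move/eqP; rewrite addrC addr_eq0 => /eqP ->; rewrite -mulrN opprB.
Qed.

End TriangularEigenvector.

Lemma wle_trans (R : realType) (r : nat) (Phi : seq 'rV[R]_r) (xi u v w : 'rV[R]_r) :
  wle Phi xi u v -> wle Phi xi v w -> wle Phi xi u w.
Proof.
move=> [k1 vu] [k2 wv]; exists (fun i => k2 i + k1 i)%N.
rewrite -[w](subrK v) -addrA [v - u]vu wv -big_split /=.
by apply: eq_bigr => i _; rewrite natrD scalerDl.
Qed.

Section WeightEnumeration.
Variables (R : realType) (r : nat) (Phi : seq 'rV[R]_r) (xi lam : 'rV[R]_r).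
Variables (n : nat) (e : 'I_n.+1 -> 'rV[R]_r).
Hypothesis e_inj : injective e.
Hypothesis e_lower : forall j, dominant Phi xi (e j) /\ wle Phi xi (e j) lam.
Hypothesis e_onto : forall mu, dominant Phi xi mu -> wle Phi xi mu lam -> exists j, e j = mu.
Hypothesis e_sorted : forall i j, wlt Phi xi (e i) (e j) -> (i < j)%N.

Definition lower_seq (j : 'I_n.+1) : seq 'rV[R]_r :=
  [seq e i | i <- enum 'I_n.+1 & `[< wle Phi xi (e i) (e j) >]].

Lemma lower_seq_enum j : lower_enum Phi xi (e j) (lower_seq j).
Proof.
split; first by rewrite map_inj_uniq // filter_uniq // enum_uniq.
move=> mu; split => [/mapP[i] | [mu_dom mu_le]].
  by rewrite mem_filter => /andP[/asboolP ij _] ->; split; first exact: (e_lower i).1.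
have [i ei] := e_onto mu_dom (wle_trans mu_le (e_lower j).2); rewrite -ei in mu_le *.
by apply: map_f; rewrite mem_filter mem_enum inE andbT; apply/asboolP.
Qed.

Lemma big_lower_seq (V : nmodType) (f : 'rV[R]_r -> V) j :
  (forall i, ~ wle Phi xi (e i) (e j) -> f (e i) = 0) ->
  \sum_(mu <- lower_seq j) f mu = \sum_(i < n.+1) f (e i).
Proof.
move=> f_out; rewrite big_map big_filter big_mkcond big_enum /=.
apply: eq_bigr => i _; by case: asboolP => // /f_out ->.
Qed.

Lemma ltn_enum_not_wle (j k : 'I_n.+1) : (j < k)%N -> ~ wle Phi xi (e k) (e j).
Proof.
move=> jk kj; have /e_sorted : wlt Phi xi (e k) (e j).
  by split=> // /e_inj ekj; move: jk; rewrite ekj ltnn.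
by rewrite ltnNge (ltnW jk).
Qed.

Lemma dominant_basis_free_enum (F : fieldType) (V : lmodType F) (s : 'rV[R]_r -> V) :
  dominant_basis Phi xi s ->
  forall k : 'I_n.+1 -> F, \sum_(i < n.+1) k i *: s (e i) = 0 -> forall i, k i = 0.
Proof.
move=> [s_free _] k ks0 i.
pose K mu := if [pick j | e j == mu] is Some j then k j else 0.
have K_e j : K (e j) = k j.
  by rewrite /K; case: pickP => [j' /eqP /e_inj -> // | /(_ j)]; rewrite eqxx.
rewrite -K_e; apply: (s_free [seq e j | j <- enum 'I_n.+1]).
- by rewrite map_inj_uniq // enum_uniq.
- by move=> _ /mapP[j _ ->]; exact: (e_lower j).1.
- by rewrite big_map big_enum /=; under eq_bigr do rewrite K_e.
- exact: map_f (mem_enum _ _).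
Qed.

End WeightEnumeration.

Theorem mainTheorem3
  (R : realType) (r : nat) (Phi : seq 'rV[R]_r) (xi : 'rV[R]_r)
  (F : fieldType) (V : lmodType F) (D : {linear V -> V})
  (m s : 'rV[R]_r -> V) (a b : 'rV[R]_r -> 'rV[R]_r -> F) (eps : 'rV[R]_r -> F)
  (lam : 'rV[R]_r) (n : nat) (e : 'I_n.+1 -> 'rV[R]_r)
  (p : V) (c : 'rV[R]_r -> F) :
  irreducible_root_system Phi ->
  regular_vector Phi xi ->
  (* m_mu and s_mu (mu dominant) are bases of A^W *)
  @dominant_basis R r F V Phi xi m ->
  @dominant_basis R r F V Phi xi s ->
  (* m_l = sum_{mu <= l} a_{l mu} s_mu,  a_{ll} = 1 *)
  (forall l, dominant Phi xi l -> forall rs, lower_enum Phi xi l rs ->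
     m l = \sum_(mu <- rs) a l mu *: s mu) ->
  (forall l, dominant Phi xi l -> a l l = 1) ->
  (* D m_l = sum_{mu <= l} b_{l mu} s_mu,  b_{ll} = eps_l *)
  (forall l, dominant Phi xi l -> forall rs, lower_enum Phi xi l rs ->
     D (m l) = \sum_(mu <- rs) b l mu *: s mu) ->
  (forall l, dominant Phi xi l -> b l l = eps l) ->
  (* a_{l mu}, b_{l mu} are coefficients, hence vanish unless mu <= l *)
  (forall l mu, dominant Phi xi l -> dominant Phi xi mu -> ~ wle Phi xi mu l ->
     a l mu = 0 /\ b l mu = 0) ->
  (* D is regular *)
  (forall l mu, dominant Phi xi l -> dominant Phi xi mu -> wlt Phi xi mu l ->
     eps mu != eps l) ->
  dominant Phi xi lam ->
  (* lambda^(1..n+1) (indices 0..n here) enumerates {mu dominant | mu <= lam} *)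
  injective e ->
  (forall j, dominant Phi xi (e j) /\ wle Phi xi (e j) lam) ->
  (forall mu, dominant Phi xi mu -> wle Phi xi mu lam -> exists j, e j = mu) ->
  (forall i j, wlt Phi xi (e i) (e j) -> (i < j)%N) ->
  e ord_max = lam ->
  (* p_lam : D p = eps_lam p,  p = m_lam + sum_{mu < lam} c_{lam mu} m_mu *)
  D p = eps lam *: p ->
  c lam = 1 ->
  p = \sum_(j < n.+1) c (e j) *: m (e j) ->
  forall l : 'I_n.+1,
    c (e l) = cformula
      (fun j k => b (e j) (e k) - eps lam * a (e j) (e k))
      (fun k => eps lam - eps (e k)) l.
Proof.
move=> _ _ _ s_basis m_exp a_diag Dm_exp b_diag ab_lower D_regular lam_dom
  e_inj e_lower e_onto e_sorted e_max Dp c_lam p_def.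
have ab_out j i : ~ wle Phi xi (e i) (e j) -> a (e j) (e i) = 0 /\ b (e j) (e i) = 0.
  exact: ab_lower (e_lower j).1 (e_lower i).1.
have ab_triu (j i : 'I_n.+1) : (j < i)%N -> a (e j) (e i) = 0 /\ b (e j) (e i) = 0.
  by move/(ltn_enum_not_wle e_inj e_sorted)/ab_out.
have sum_lower j (f : 'rV[R]_r -> F) : (forall i, ~ wle Phi xi (e i) (e j) -> f (e i) = 0) ->
    \sum_(mu <- lower_seq Phi xi e j) f mu *: s mu = \sum_(i < n.+1) f (e i) *: s (e i).
  by move=> f_out; apply: big_lower_seq => i /f_out ->; rewrite scale0r.
apply: (eq_cformula (c := c \o e)) => [|k k_max|k _] /=.
- by rewrite e_max.
- have lt_lam : wlt Phi xi (e k) lam.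
    split; first exact: (e_lower k).2.
    by rewrite -e_max => /e_inj k_eq; rewrite k_eq eqxx in k_max.
  by rewrite subr_eq0 eq_sym (D_regular _ _ lam_dom (e_lower k).1 lt_lam).
rewrite -[eps (e k)](b_diag _ (e_lower k).1).
apply: (@eigenvector_coef_rec F V D n (m \o e) (s \o e)
  (fun j i => a (e j) (e i)) (fun j i => b (e j) (e i))) => //=.
- by move=> coef; apply: (dominant_basis_free_enum e_inj e_lower s_basis (k := coef)).
- move=> j; rewrite (m_exp _ (e_lower j).1 _ (lower_seq_enum e_inj e_lower e_onto j)).
  by rewrite sum_lower // => i /ab_out [].
- move=> j; rewrite (Dm_exp _ (e_lower j).1 _ (lower_seq_enum e_inj e_lower e_onto j)).
  by rewrite sum_lower // => i /ab_out [].
- by move=> j i /ab_triu [].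
- by move=> j i /ab_triu [].
- by move=> i; exact: a_diag (e_lower i).1.
- by rewrite -p_def.
Qed.
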